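(* Let $a=\sum_{t=0}^7a_te_t\in C\ell_{1,2}$ and let $\mathbf{i}=\sqrt{-1}\in\mathbb{C}$. The (complex) eigenvalues of $L(a)$ are $$\lambda_{1,2}=a_0+a_7\mathbf{i}\pm\sqrt{(a_0+a_7\mathbf{i})^2-N(a)-2T(a)\mathbf{i}},\qquad \lambda_{3,4}=a_0-a_7\mathbf{i}\pm\sqrt{(a_0-a_7\mathbf{i})^2-N(a)+2T(a)\mathbf{i}},$$ and each eigenvalue occurs with algebraic multiplicity $2$.
   Context: $C\ell_{1,2}$ is the real Clifford algebra generated by $i_1,i_2,i_3$ with $i_1^2=1$, $i_2^2=i_3^2=-1$ and $i_ti_m=-i_mi_t$ for $t\neq m$, with real basis $e_0=1$, $e_1=i_1$, $e_2=i_2$, $e_3=i_1i_2$, $e_4=i_3$, $e_5=i_1i_3$, $e_6=i_2i_3$, $e_7=i_1i_2i_3$. For $x=\sum_{t=0}^7x_te_t$ write $\overrightarrow{x}=(x_0,\dots,x_7)^T\in\mathbb{R}^8$. For $a\in C\ell_{1,2}$, $L(a)$ is the real $8\times8$ matrix with $\overrightarrow{ax}=L(a)\overrightarrow{x}$ for all $x$. For $a=\sum a_te_t$: $N(a)=a_0^2-a_1^2+a_2^2-a_3^2+a_4^2-a_5^2+a_6^2-a_7^2$ and $T(a)=a_0a_7+a_2a_5-a_1a_6-a_3a_4$. *)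

From HB Require Import structures.
From mathcomp Require Import all_boot all_order all_algebra.
From mathcomp Require Import complex.
Set Implicit Arguments. Unset Strict Implicit. Unset Printing Implicit Defensive.
Import Order.TTheory GRing.Theory Num.Theory.
Local Open Scope ring_scope.

(* Basis of Cl_{1,2}: e_t, t in 'I_8, is the blade whose generators are the
   binary digits of t: bit 0 <-> i1, bit 1 <-> i2, bit 2 <-> i3.
   e0=1, e1=i1, e2=i2, e3=i1i2, e4=i3, e5=i1i3, e6=i2i3, e7=i1i2i3. *)
Definition cl_bit (t k : nat) : bool := odd (t %/ 2 ^ k).

Definition cl_gen_sq {R : ringType} (k : nat) : R := if k == 0%N then 1 else -1.

(* index of the blade e_s e_t (symmetric difference of generator sets) *)
Definition cl_idx (s t : nat) : nat :=
  \sum_(k < 3) (cl_bit s k != cl_bit t k) * 2 ^ k.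

(* sign in e_s e_t = cl_sign s t * e_(cl_idx s t):
   (-1)^(number of anticommuting swaps) times the squares of common generators *)
Definition cl_sign {R : ringType} (s t : nat) : R :=
  (-1) ^+ (\sum_(j < 3) \sum_(k < 3) ((k < j)%N && cl_bit s j && cl_bit t k))
  * \prod_(k < 3 | cl_bit s k && cl_bit t k) cl_gen_sq k.

Definition cl_mul {R : ringType} (a x : 'cV[R]_8) : 'cV[R]_8 :=
  \col_(i < 8) \sum_(s < 8) \sum_(t < 8)
     (if cl_idx s t == i then cl_sign s t * a s 0 * x t 0 else 0).

Definition Lmx {R : ringType} (a : 'cV[R]_8) : 'M[R]_8 :=
  \matrix_(i < 8, j < 8) cl_mul a (delta_mx j 0) i 0.

Definition cl_coord {R : ringType} (a : 'cV[R]_8) (t : nat) : R :=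
  a (inord t) 0.

Definition cl_N {R : ringType} (a : 'cV[R]_8) : R :=
  let c := cl_coord a in
  c 0%N ^+ 2 - c 1%N ^+ 2 + c 2%N ^+ 2 - c 3%N ^+ 2
  + c 4%N ^+ 2 - c 5%N ^+ 2 + c 6%N ^+ 2 - c 7%N ^+ 2.

Definition cl_T {R : ringType} (a : 'cV[R]_8) : R :=
  let c := cl_coord a in
  c 0%N * c 7%N + c 2%N * c 5%N - c 1%N * c 6%N - c 3%N * c 4%N.

From HB Require Import structures.
From mathcomp Require Import all_boot all_order all_algebra.
From mathcomp Require Import perm complex ring.
Set Implicit Arguments. Unset Strict Implicit. Unset Printing Implicit Defensive.
Import GRing.Theory.
Local Open Scope ring_scope.

(* The blade e7 = i1 i2 i3 is central with e7^2 = -1, so L(a) commutes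
   with right multiplication by e7, a complex structure on Cl_{1,2}.  In the basis
   e_k, e_k e7 (e_k running over the even blades e0, e3, e5, e6) the matrix of L(a)
   is [[P, -Q], [Q, P]], hence det L(a) = det (P - jQ) det (P + jQ) for any j with
   j^2 = -1.  P + jQ is the left regular representation of the split quaternion
   q + j q', where a = q + q' e7 with q, q' even, so its determinant is the square
   of the norm N(a) + 2j T(a).  Thus det L(a) = (N(a)^2 + 4 T(a)^2)^2 over any commutative ring
   containing a square root of -1.  As L is linear with L(1) = 1, the characteristic
   polynomial of L(a) is det L(X - a) over C[X], and
   N(X - a) +- 2i T(X - a) = (X - b)^2 - (b^2 - N(a) -+ 2i T(a)) with b = a0 +- a7 i. *)

(* Unrolled forms of [cl_idx] and of the exponent in [cl_sign]: unlike the bigops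
   of the definitions, they reduce on numerals. *)
Definition cl_xor (s t : nat) : nat :=
  ((cl_bit s 0 != cl_bit t 0) + (cl_bit s 1 != cl_bit t 1) * 2
   + (cl_bit s 2 != cl_bit t 2) * 4)%N.

Definition cl_sign_exp (s t : nat) : nat :=
  ((cl_bit s 1 && cl_bit t 0) + (cl_bit s 2 && cl_bit t 0)
   + (cl_bit s 2 && cl_bit t 1)
   + (cl_bit s 1 && cl_bit t 1) + (cl_bit s 2 && cl_bit t 2))%N.

Lemma cl_idxE s t : cl_idx s t = cl_xor s t.
Proof. by rewrite /cl_idx !big_ord_recr big_ord0 /= muln1. Qed.

Lemma cl_signE (K : comNzRingType) s t : cl_sign s t = (-1) ^+ cl_sign_exp s t :> K.
Proof.
rewrite /cl_sign [X in _ * X]big_mkcond !big_ord_recr !big_ord0.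
rewrite /cl_sign_exp /cl_gen_sq /=.
by case: (cl_bit s 0); case: (cl_bit s 1); case: (cl_bit s 2);
   case: (cl_bit t 0); case: (cl_bit t 1); case: (cl_bit t 2); rewrite /=; ring.
Qed.

Lemma cl_xor_lt (i k : 'I_8) : (cl_xor i k < 8)%N.
Proof. by rewrite /cl_xor; do 3!case: (_ != _). Qed.

Lemma cl_xor0n (k : 'I_8) : cl_xor 0 k = k.
Proof. by case: k => [[|[|[|[|[|[|[|[|//]]]]]]]] ?]. Qed.

Lemma cl_xorK (i k : 'I_8) : cl_xor (cl_xor i k) k = i.
Proof.
by case: i => [[|[|[|[|[|[|[|[|//]]]]]]]] ?]; case: k => [[|[|[|[|[|[|[|[|//]]]]]]]] ?].
Qed.

Lemma cl_xornn (i : nat) : cl_xor i i = 0.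
Proof. by rewrite /cl_xor !eqxx. Qed.

Lemma cl_xor_eq0 (i k : 'I_8) : (cl_xor i k == 0) = (i == k).
Proof.
apply/eqP/eqP => [xik|<-]; last exact: cl_xornn.
by apply: val_inj; rewrite /= -(cl_xorK i k) xik cl_xor0n.
Qed.

Lemma LmxE (K : comNzRingType) (c : 'cV[K]_8) :
  Lmx c = \matrix_(i, k) ((-1) ^+ cl_sign_exp (cl_xor i k) k * cl_coord c (cl_xor i k)).
Proof.
apply/matrixP => i k; rewrite [RHS]mxE.
pose s := Ordinal (cl_xor_lt i k).
rewrite /Lmx mxE /cl_mul mxE (bigD1 s) //= [X in _ + X]big1 ?addr0; last first.
  move=> s' s's; apply: big1 => t _; rewrite cl_idxE !mxE.
  have [->|_] := eqVneq t k; last by rewrite andFb mulr0 if_same.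
  have /negbTE -> // : cl_xor s' k != i.
  by apply: contra s's => /eqP xs'k; rewrite -val_eqE /= -xs'k cl_xorK.
rewrite (bigD1 k) //= [X in _ + X]big1 ?addr0; last first.
  by move=> t /negbTE tk; rewrite mxE tk mulr0; case: ifP.
rewrite cl_idxE cl_xorK eqxx mxE !eqxx mulr1 cl_signE /cl_coord.
by congr (_ * c _ 0); apply: val_inj; rewrite /= inordK // cl_xor_lt.
Qed.

Section LeftMultiplication.
Variable K : comNzRingType.
Implicit Types c d : 'cV[K]_8.

Lemma LmxB c d : Lmx (c - d) = Lmx c - Lmx d.
Proof. by rewrite !LmxE; apply/matrixP => i k; rewrite !mxE /cl_coord !mxE mulrBr. Qed.

Lemma LmxZ (x : K) c : Lmx (x *: c) = x *: Lmx c.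
Proof. by rewrite !LmxE; apply/matrixP => i k; rewrite !mxE /cl_coord !mxE mulrCA. Qed.

Lemma Lmx_e0 : Lmx (delta_mx 0 0 : 'cV[K]_8) = 1%:M.
Proof.
rewrite LmxE; apply/matrixP => i k; rewrite /cl_coord !mxE andbT.
rewrite -val_eqE /= inordK ?cl_xor_lt // cl_xor_eq0.
have [<-|_] := eqVneq i k; last by rewrite mulr0.
by rewrite cl_xornn /cl_sign_exp /cl_bit div0n mulr1.
Qed.

Lemma map_Lmx (K' : comNzRingType) (f : {rmorphism K -> K'}) c :
  map_mx f (Lmx c) = Lmx (map_mx f c).
Proof.
by rewrite !LmxE; apply/matrixP => i k; rewrite !mxE rmorphM rmorph_sign /cl_coord mxE.
Qed.

End LeftMultiplication.

Section CharacteristicVector.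
Variable K : comNzRingType.
Implicit Type c : 'cV[K]_8.

Definition cl_char_vec c : 'cV[{poly K}]_8 := 'X *: delta_mx 0 0 - map_mx polyC c.

Lemma char_poly_mx_Lmx c : char_poly_mx (Lmx c) = Lmx (cl_char_vec c).
Proof. by rewrite LmxB LmxZ Lmx_e0 -map_Lmx scalemx1. Qed.

Lemma cl_coord_char_vec c n : (n < 8)%N ->
  cl_coord (cl_char_vec c) n = (n == 0)%:R * 'X - (cl_coord c n)%:P.
Proof.
by move=> n_lt8; rewrite /cl_coord !mxE andbT -val_eqE /= inordK // mulrC.
Qed.

Lemma cl_N_char_vec c :
  cl_N (cl_char_vec c) = 'X ^+ 2 - 2%:R * (cl_coord c 0)%:P * 'X + (cl_N c)%:P.
Proof. by rewrite /cl_N /= !cl_coord_char_vec //=; ring. Qed.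

Lemma cl_T_char_vec c : cl_T (cl_char_vec c) = (cl_T c)%:P - (cl_coord c 7)%:P * 'X.
Proof. by rewrite /cl_T /= !cl_coord_char_vec //=; ring. Qed.

End CharacteristicVector.

Section Determinants.
Context {K : comNzRingType}.

Lemma det_realified_block n (j : K) : j ^+ 2 = -1 -> forall P Q : 'M[K]_n,
  \det (block_mx P (- Q) Q P) = \det (P - j *: Q) * \det (P + j *: Q).
Proof.
move=> jj P Q.
pose U : 'M[K]_(n + n) := block_mx 1%:M 0 j%:M 1%:M.
pose V : 'M[K]_(n + n) := block_mx 1%:M 0 (- j)%:M 1%:M.
have detU : \det U = 1 by rewrite det_lblock !det1 mulr1.
have detV : \det V = 1 by rewrite det_lblock !det1 mulr1.
have triang : V *m block_mx P (- Q) Q P *m U = block_mx (P - j *: Q) (- Q) 0 (P + j *: Q).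
  rewrite /U /V !mulmx_block !mulmx1 !mulmx0 !mul1mx !mul0mx !addr0 !add0r.
  rewrite !mul_mx_scalar !mul_scalar_mx.
  congr block_mx; apply/matrixP => a b; rewrite !mxE; [ring | | ring].
  by transitivity ((j ^+ 2 + 1) * Q a b); [ring | rewrite jj addNr mul0r].
by rewrite -(det_ublock _ (- Q)) -triang !det_mulmx detU detV mul1r mulr1.
Qed.

Lemma det_signed_perm_conj n (s : 'S_n) (d : 'rV[K]_n) (A : 'M[K]_n) :
  (forall i, d 0 i ^+ 2 = 1) ->
  \det (diag_mx d *m row_perm s (col_perm s A) *m diag_mx d) = \det A.
Proof.
move=> d2.
have det_d2 : \det (diag_mx d) ^+ 2 = 1 by rewrite det_diag -prodrXl big1.
rewrite row_permE col_permE !det_mulmx !det_perm odd_permV.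
have sgn2 : (-1) ^+ s * (-1) ^+ s = 1 :> K by rewrite -signr_addb addbb.
move: det_d2 sgn2; move: (\det (diag_mx d)) ((-1) ^+ s) => x y x2 y2.
by transitivity (x ^+ 2 * (y * y) * \det A); [ring | rewrite x2 y2 !mul1r].
Qed.

(* Left multiplication by a + b u + g v + d w in the split quaternions
   (u^2 = v^2 = 1, w = v u), in the basis 1, u, v, w. *)
Definition split_quat_mx (a b g d : K) : 'M[K]_4 :=
  \matrix_(i, k) nth 0 (nth [::] [:: [:: a; b; g; - d]; [:: b; a; - d; g];
                                     [:: g; d; a; - b]; [:: d; g; - b; a]] i) k.

Lemma det_split_quat_mx (a b g d : K) :
  \det (split_quat_mx a b g d) = (a ^+ 2 - b ^+ 2 - g ^+ 2 + d ^+ 2) ^+ 2.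
Proof.
do 3 rewrite !(expand_det_row _ ord0) !big_ord_recr !big_ord0 /cofactor ?mxE /=.
by rewrite !det_mx11 !mxE /=; ring.
Qed.

End Determinants.

(* With the signs [cl_signs] this orders the basis as e0, e3, e5, e6, e0 e7, e3 e7,
   e5 e7, e6 e7, since e0 e7 = e7, e3 e7 = e4, e5 e7 = - e2 and e6 e7 = - e1. *)
Definition cl_perm_seq : seq nat := [:: 0; 3; 5; 6; 7; 4; 2; 1]%N.

Lemma cl_perm_lt (i : 'I_8) : (nth 0 cl_perm_seq i < 8)%N.
Proof. by case: i => [[|[|[|[|[|[|[|[|//]]]]]]]] ?]. Qed.

Lemma cl_perm_inj : injective (fun i : 'I_8 => Ordinal (cl_perm_lt i)).
Proof.
move=> i k /(congr1 val) /= ik; apply: val_inj; move: ik.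
by case: i => [[|[|[|[|[|[|[|[|//]]]]]]]] ?]; case: k => [[|[|[|[|[|[|[|[|//]]]]]]]] ?].
Qed.

Definition cl_perm : 'S_8 := perm cl_perm_inj.

Definition cl_signs {K : comNzRingType} : 'rV[K]_8 := \row_(i < 8) (-1) ^+ (6 <= i)%N.

Section ComplexStructure.
Variable K : comNzRingType.
Implicit Type c : 'cV[K]_8.

Definition Lmx_e7basis c : 'M[K]_(4 + 4) :=
  diag_mx cl_signs *m row_perm cl_perm (col_perm cl_perm (Lmx c)) *m diag_mx cl_signs.

Lemma det_Lmx_e7basis c : \det (Lmx_e7basis c) = \det (Lmx c).
Proof. by apply: det_signed_perm_conj => i; rewrite mxE sqrr_sign. Qed.

Lemma Lmx_e7basisE c : Lmx_e7basis c =
  \matrix_(i, k) ((-1) ^+ ((6 <= i)%N + (6 <= k)%N) * Lmx c (cl_perm i) (cl_perm k)).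
Proof.
by apply/matrixP => i k; rewrite /Lmx_e7basis mul_mx_diag mul_diag_mx !mxE exprD mulrAC.
Qed.

Lemma Lmx_e7basis_block c :
  Lmx_e7basis c = block_mx (ulsubmx (Lmx_e7basis c)) (- dlsubmx (Lmx_e7basis c))
                           (dlsubmx (Lmx_e7basis c)) (ulsubmx (Lmx_e7basis c)).
Proof.
rewrite -{1}[Lmx_e7basis c]submxK Lmx_e7basisE LmxE.
congr block_mx; apply/matrixP => i k; rewrite !mxE !permE /=.
all: by case: i => [[|[|[|[|//]]]] ?]; case: k => [[|[|[|[|//]]]] ?]; ring.
Qed.

Lemma Lmx_e7basis_cplx c (j : K) :
  ulsubmx (Lmx_e7basis c) + j *: dlsubmx (Lmx_e7basis c) =
  split_quat_mx (cl_coord c 0 + j * cl_coord c 7) (cl_coord c 3 + j * cl_coord c 4)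
                (cl_coord c 5 - j * cl_coord c 2) (cl_coord c 6 - j * cl_coord c 1).
Proof.
rewrite Lmx_e7basisE LmxE; apply/matrixP => i k; rewrite !mxE !permE /=.
by case: i => [[|[|[|[|//]]]] ?]; case: k => [[|[|[|[|//]]]] ?]; rewrite /=; ring.
Qed.

Lemma split_quat_normE c (j : K) : j ^+ 2 = -1 ->
  (cl_coord c 0 + j * cl_coord c 7) ^+ 2 - (cl_coord c 3 + j * cl_coord c 4) ^+ 2
  - (cl_coord c 5 - j * cl_coord c 2) ^+ 2 + (cl_coord c 6 - j * cl_coord c 1) ^+ 2
  = cl_N c + 2%:R * j * cl_T c.
Proof.
move=> jj; transitivity (cl_N c + 2%:R * j * cl_T c + (j ^+ 2 + 1) *
  (cl_coord c 1 ^+ 2 - cl_coord c 2 ^+ 2 - cl_coord c 4 ^+ 2 + cl_coord c 7 ^+ 2)).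
  by rewrite /cl_N /cl_T /=; ring.
by rewrite jj addNr mul0r addr0.
Qed.

Lemma det_Lmx c (j : K) : j ^+ 2 = -1 ->
  \det (Lmx c) = (cl_N c ^+ 2 + 4%:R * cl_T c ^+ 2) ^+ 2.
Proof.
move=> jj; have jNj : (- j) ^+ 2 = -1 by rewrite sqrrN.
rewrite -det_Lmx_e7basis Lmx_e7basis_block (det_realified_block jj) -scaleNr.
rewrite !Lmx_e7basis_cplx !det_split_quat_mx !split_quat_normE // -exprMn.
congr (_ ^+ 2).
by transitivity (cl_N c ^+ 2 - j ^+ 2 * 4%:R * cl_T c ^+ 2); [ring | rewrite jj; ring].
Qed.

End ComplexStructure.

Section CoordinateMaps.
Variables (K K' : comNzRingType) (f : {rmorphism K -> K'}).
Implicit Type c : 'cV[K]_8.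

Lemma cl_coord_map c n : cl_coord (map_mx f c) n = f (cl_coord c n).
Proof. by rewrite /cl_coord mxE. Qed.

Lemma cl_N_map c : cl_N (map_mx f c) = f (cl_N c).
Proof. by rewrite /cl_N /= !cl_coord_map !rmorphD !rmorphN !rmorphXn. Qed.

Lemma cl_T_map c : cl_T (map_mx f c) = f (cl_T c).
Proof. by rewrite /cl_T /= !cl_coord_map !rmorphD !rmorphN !rmorphM. Qed.

End CoordinateMaps.

Local Open Scope complex_scope.

Theorem proposition2p5 (R : rcfType) (a : 'cV[R]_8) :
  let a0 : R[i] := (cl_coord a 0%N)%:C in
  let a7 : R[i] := (cl_coord a 7%N)%:C in
  let N : R[i] := (cl_N a)%:C in
  let T : R[i] := (cl_T a)%:C in
  let b1 := a0 + a7 * 'i in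
  let b2 := a0 - a7 * 'i in
  let r1 := sqrtc (b1 ^+ 2 - N - 2%:R * T * 'i) in
  let r2 := sqrtc (b2 ^+ 2 - N + 2%:R * T * 'i) in
  let l1 := b1 + r1 in
  let l2 := b1 - r1 in
  let l3 := b2 + r2 in
  let l4 := b2 - r2 in
  char_poly (map_mx (fun x : R => x%:C) (Lmx a)) =
    (('X - l1%:P) * ('X - l2%:P) * ('X - l3%:P) * ('X - l4%:P)) ^+ 2.
Proof.
move=> a0 a7 N T b1 b2 r1 r2 l1 l2 l3 l4.
have ii : ('i%:P : {poly R[i]}) ^+ 2 = -1 by rewrite -rmorphXn sqr_i rmorphN1.
rewrite /char_poly map_Lmx char_poly_mx_Lmx (det_Lmx _ ii).
rewrite cl_N_char_vec cl_T_char_vec !cl_coord_map cl_N_map cl_T_map; congr (_ ^+ 2).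
have sum_sqr (x y : {poly R[i]}) :
    x ^+ 2 + 4%:R * y ^+ 2 = (x + 2%:R * 'i%:P * y) * (x - 2%:R * 'i%:P * y).
  by rewrite [RHS]mulrC -subr_sqr !exprMn ii; ring.
have root_pair (b r : R[i]) :
    ('X - (b + r)%:P) * ('X - (b - r)%:P) = ('X - b%:P) ^+ 2 - (r ^+ 2)%:P.
  by ring.
rewrite sum_sqr -[RHS]mulrA /l1 /l2 /l3 /l4 !root_pair !sqr_sqrtc /b1 /b2 /a0 /a7 /N /T.
by congr (_ * _); ring.
Qed.
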